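(* For any $P,N>0$ with $\frac NP\le\frac{L-1}{L}$ and any $L\in\mathbb{Z}_{\ge2}$, $$\overline{C}_{L-1}(P,N)\ge\frac12\left(1-\frac{LN}{(L-1)P}-\frac1{L-1}\ln\frac{L(P-N)}{P}\right).$$
   Context: $\mathcal{B}^n(r)$ is the closed Euclidean ball of radius $r$ centered at the origin. For $x_1,\dots,x_L\in\mathbb{R}^n$ with centroid $\bar x=\frac1L\sum_ix_i$, $\overline{\mathrm{rad}}^2(x_1,\dots,x_L)=\frac1L\sum_i\|x_i-\bar x\|_2^2$. A finite $\mathcal{C}\subseteq\mathcal{B}^n(\sqrt{nP})$ is $(P,N,L-1)$-average-radius list-decodable if every $L$ distinct points of $\mathcal{C}$ have $\overline{\mathrm{rad}}^2>nN$. Rate $R(\mathcal{C})=\frac1n\ln|\mathcal{C}|$. $\overline{C}_{L-1}(P,N)=\limsup_{n\to\infty}\sup R(\mathcal{C})$ over such codes in $\mathcal{B}^n(\sqrt{nP})$. *)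

From HB Require Import structures.
From mathcomp Require Import all_boot all_order all_algebra.
From mathcomp Require Import all_classical all_reals.
From mathcomp Require Import ereal sequences exp.
Set Implicit Arguments. Unset Strict Implicit. Unset Printing Implicit Defensive.
Import Order.TTheory GRing.Theory Num.Theory.
Local Open Scope ring_scope.
Local Open Scope classical_set_scope.

Section Defs.
Variable R : realType.

Definition sqnorm (n : nat) (x : 'rV[R]_n) : R := \sum_(i < n) x 0 i ^+ 2.

Definition centroid (n L : nat) (x : 'I_L -> 'rV[R]_n) : 'rV[R]_n :=
  L%:R^-1 *: \sum_(i < L) x i.

Definition avg_rad2 (n L : nat) (x : 'I_L -> 'rV[R]_n) : R :=
  L%:R^-1 * \sum_(i < L) sqnorm (x i - centroid x).

(* a code C (finite, given as a duplicate-free list) contained in the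
   closed ball of radius sqrt(nP), which is (P,N,L-1)-average-radius
   list-decodable: any L distinct codewords have avg_rad2 > nN *)
Definition avg_rad_list_decodable (n L : nat) (P N : R) (C : seq 'rV[R]_n) :=
  uniq C /\
  (forall c, c \in C -> Num.sqrt (sqnorm c) <= Num.sqrt (n%:R * P)) /\
  (forall x : 'I_L -> 'rV[R]_n, injective x -> (forall i, x i \in C) ->
     avg_rad2 x > n%:R * N).

Definition rate (n : nat) (C : seq 'rV[R]_n) : R := ln (size C)%:R / n%:R.

Definition best_rate (L : nat) (P N : R) (n : nat) : \bar R :=
  ereal_sup [set (rate C)%:E | C in [set C : seq 'rV[R]_n |
                                    avg_rad_list_decodable L P N C]].

Definition list_dec_capacity (L : nat) (P N : R) : \bar R :=
  limn_esup (best_rate L P N).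
End Defs.

(* Random coding with expurgation on the binary cube.  The codewords are sign
   vectors [sqrt P * (+-1)^n], all on the sphere of radius [sqrt (n P)].  For [L]
   of them the average squared radius is [n P - P / L^2 * Q], where
   [Q = sum_j (sum_i s_ij)^2], so a list is bad exactly when [Q >= n L u] with
   [u = L (P - N) / P].  A Chernoff bound, comparing a sum of [L] random signs
   with a Gaussian, shows that at most [2^(n L) exp (-n (u - 1 - ln u) / 2)]
   [L]-tuples of words are bad.  Keeping each word with probability [p] and
   deleting one word from every surviving bad tuple leaves at least
   [2^n p - #bad * p^L] words; with [2^n p = exp (n r)] and [r] just below
   [(u - 1 - ln u) / (2 (L - 1))] this is at least [exp (n r) / 2]. *)

From HB Require Import structures.
From mathcomp Require Import all_boot all_order all_algebra.
From mathcomp Require Import all_classical all_reals.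
From mathcomp Require Import ereal sequences exp.
From mathcomp Require Import normedtype.
From mathcomp Require Import zify ring lra.
Import Order.TTheory GRing.Theory Num.Theory.
Import numFieldNormedType.Exports.
Local Open Scope ring_scope.

Lemma leq_expn2_fact_double k : (2 ^ k * k`! <= (k.*2)`!)%N.
Proof.
elim: k => [//|k IH]; rewrite doubleS !factS expnS -!muln2 in IH *.
nia.
Qed.

Section SignSums.
Variable R : realType.

Lemma big_double_odd0 (g : nat -> R) m : (forall k, g k.*2.+1 = 0) ->
  \sum_(0 <= i < m.*2) g i = \sum_(0 <= k < m) g k.*2.
Proof.
move=> g_odd; elim: m => [|m IH]; first by rewrite !big_geq.
by rewrite doubleS !big_nat_recr //= IH g_odd addr0.
Qed.

(* Termwise comparison of the exponential series: the even coefficients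
   satisfy [1/(2k)! <= 1/(2^k k!)] and the odd ones cancel. *)
Lemma expR_add_expRN_le (y : R) : expR y + expR (- y) <= 2 * expR (y ^+ 2 / 2).
Proof.
rewrite /expR -limD; [|exact: is_cvg_series_exp_coeff|exact: is_cvg_series_exp_coeff].
rewrite (_ : 2 * _ = limn ((2 : R) *: series (exp_coeff (y ^+ 2 / 2)))); last first.
  by rewrite limZl_tmp //; exact: is_cvg_series_exp_coeff.
apply: ler_lim.
- by apply: is_cvgD; exact: is_cvg_series_exp_coeff.
- by apply: is_cvgZl_tmp; exact: is_cvg_series_exp_coeff.
near=> m; rewrite !fctE /series /= -big_split /=.
set g := fun i => exp_coeff y i + exp_coeff (- y) i.
have g_odd k : g k.*2.+1 = 0.
  by rewrite /g /exp_coeff /= -mul2n !exprS !exprM sqrrN !mulNr addrN.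
have g_even k : g k.*2 = 2 * ((y ^+ 2) ^+ k / (k.*2)`!%:R).
  rewrite /g /exp_coeff /= -mul2n !exprM sqrrN; lra.
have g_ge0 i : 0 <= g i.
  have := odd_double_half i; case: (odd i) => /= <-; first by rewrite add1n g_odd.
  by rewrite add0n g_even mulr_ge0 // divr_ge0 // exprn_ge0 // sqr_ge0.
apply: (@le_trans _ _ (\sum_(0 <= i < m.*2) g i)).
  rewrite [X in _ <= X](big_cat_nat (n := m)) //=; last by rewrite -addnn leq_addr.
  by rewrite lerDl sumr_ge0.
rewrite big_double_odd0 // scaler_sumr; apply: ler_sum => k _.
rewrite g_even /exp_coeff /= expr_div_n /GRing.scale /= -mulrA.
apply: ler_wpM2l => //; apply: ler_wpM2l; first by rewrite exprn_ge0 // sqr_ge0.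
rewrite -invfM -natrX -natrM.
rewrite lef_pV2 ?posrE ?ltr0n ?muln_gt0 ?expn_gt0 ?fact_gt0 //.
by rewrite ler_nat leq_expn2_fact_double.
Unshelve. all: by end_near.
Qed.

Definition bsign (b : bool) : R := if b then 1 else -1.

Lemma bsign_sqr b : bsign b ^+ 2 = 1.
Proof. by case: b; rewrite /bsign ?sqrrN expr1n. Qed.

(* The right-hand side is [E exp(mu (a + G)^2)] for a standard Gaussian [G],
   which dominates a uniform sign. *)
Lemma expR_sqr_sign_step (mu a : R) : 0 <= mu -> 2 * mu < 1 ->
  expR (mu * (a + 1) ^+ 2) + expR (mu * (a - 1) ^+ 2) <=
  2 * expR (- ln (1 - 2 * mu) / 2 + mu * a ^+ 2 / (1 - 2 * mu)).
Proof.
move=> mu_ge0 mu_lt.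
have -> : mu * (a + 1) ^+ 2 = mu * (a ^+ 2 + 1) + 2 * mu * a by ring.
have -> : mu * (a - 1) ^+ 2 = mu * (a ^+ 2 + 1) + - (2 * mu * a) by ring.
rewrite !expRD -mulrDr.
apply: (le_trans (ler_wpM2l (expR_ge0 _) (expR_add_expRN_le _))).
rewrite mulrCA -expRD ler_pM2l // -expRD ler_expR.
have d_gt0 : 0 < 1 - 2 * mu by lra.
have ln_le : ln (1 - 2 * mu) <= - (2 * mu) by apply: le_ln1Dx; lra.
have geom : mu * a ^+ 2 * (1 + 2 * mu) <= mu * a ^+ 2 / (1 - 2 * mu).
  rewrite ler_pdivlMr //.
  have : 0 <= mu * a ^+ 2 * (4 * mu ^+ 2).
    by apply: mulr_ge0; [rewrite mulr_ge0 ?sqr_ge0 | nra].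
  nra.
have -> : (2 * mu * a) ^+ 2 / 2 = 2 * mu ^+ 2 * a ^+ 2 by field.
nra.
Qed.

Definition ffun_cons {T : Type} {L : nat} (b : T) (g : {ffun 'I_L -> T}) :
  {ffun 'I_L.+1 -> T} := [ffun i => if unlift ord0 i is Some j then g j else b].

Lemma big_ffun_recl (T : finType) (L : nat) (F : {ffun 'I_L.+1 -> T} -> R) :
  \sum_(f : {ffun 'I_L.+1 -> T}) F f =
  \sum_(b : T) \sum_(g : {ffun 'I_L -> T}) F (ffun_cons b g).
Proof.
rewrite pair_big /= (reindex (fun p : T * _ => ffun_cons p.1 p.2)) //=.
exists (fun f : {ffun 'I_L.+1 -> T} => (f ord0, [ffun j => f (lift ord0 j)])).
  move=> [b g] _ /=; rewrite /ffun_cons ffunE unlift_none; congr pair.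
  by apply/ffunP => j; rewrite !ffunE liftK.
move=> f _; apply/ffunP => i; rewrite /ffun_cons !ffunE.
by case: (unliftP ord0 i) => [j ->|->]; rewrite ?ffunE.
Qed.

Lemma sum_bsign_cons L b (g : {ffun 'I_L -> bool}) :
  \sum_(i < L.+1) bsign (ffun_cons b g i) = bsign b + \sum_(i < L) bsign (g i).
Proof.
rewrite big_ord_recl /ffun_cons ffunE unlift_none; congr (_ + _).
by apply: eq_bigr => i _; rewrite ffunE liftK.
Qed.

Lemma sum_expR_sqr_sign_sum_le (la : R) (L : nat) (a : R) :
  0 <= la -> 2 * la * L%:R < 1 ->
  \sum_(e : {ffun 'I_L -> bool}) expR (la * (a + \sum_(i < L) bsign (e i)) ^+ 2)
  <= 2 ^+ L * expR (- ln (1 - 2 * la * L%:R) / 2 + la * a ^+ 2 / (1 - 2 * la * L%:R)).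
Proof.
move=> la_ge0; elim: L a => [|L IH] a laL.
  rewrite mulr0 subr0 ln1 oppr0 mul0r add0r divr1 expr0 mul1r.
  under eq_bigr do rewrite big_ord0 addr0.
  by rewrite sumr_const card_ffun card_ord card_bool expn0 mulr1n.
rewrite big_ffun_recl big_bool /=.
under eq_bigr do rewrite sum_bsign_cons addrA.
under [X in _ + X <= _]eq_bigr do rewrite sum_bsign_cons addrA.
rewrite -natr1 in laL.
have laL' : 2 * la * L%:R < 1 by lra.
set d := 1 - 2 * la * L%:R; have d_gt0 : 0 < d by rewrite /d; lra.
(* Conditioning on the first sign, the induction hypothesis at [a + 1] and
   [a - 1] reduces the claim to one step with [mu = la / d]. *)
set mu := la / d; have mu_ge0 : 0 <= mu by rewrite divr_ge0 // ltW.
have mu_lt : 2 * mu < 1 by rewrite /mu mulrA ltr_pdivrMr // mul1r /d; lra.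
apply: (le_trans (lerD (IH (a + 1) laL') (IH (a + -1) laL'))).
rewrite -/d (exprSr (2 : R) L) -(mulrA (2 ^+ L)) -mulrDr ler_pM2l ?exprn_gt0 //.
rewrite !(expRD (- ln d / 2)) -mulrDr.
have mu_div x : la * x / d = mu * x by rewrite /mu mulrAC.
rewrite !mu_div.
apply: (le_trans (ler_wpM2l (expR_ge0 _) (expR_sqr_sign_step mu a mu_ge0 mu_lt))).
rewrite mulrCA -expRD ler_pM2l // ler_expR.
have d_step : (1 - 2 * mu) * d = 1 - 2 * la * L.+1%:R.
  by rewrite /mu /d -natr1; field; rewrite gt_eqF.
have dmu_gt0 : 0 < 1 - 2 * mu by lra.
have d2la_gt0 : 0 < d - 2 * la by rewrite /d; lra.
rewrite -d_step lnM ?posrE //.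
rewrite (_ : la * a ^+ 2 / ((1 - 2 * mu) * d) = mu * a ^+ 2 / (1 - 2 * mu)); last first.
  by rewrite /mu; field; rewrite !gt_eqF.
lra.
Qed.

End SignSums.

Section Chernoff.
Variables (R : realType) (n L : nat).
Local Notation word := {ffun 'I_n -> bool}.

Definition gram_sum (t : {ffun 'I_L -> word}) : R :=
  \sum_(j < n) (\sum_(i < L) bsign R (t i j)) ^+ 2.

Lemma card_gram_sum_ge_le_mgf (la thr : R) : 0 <= la -> 2 * la * L%:R < 1 ->
  #|[set t | thr <= gram_sum t]|%:R <=
  expR (- (la * thr)) * (2 ^+ L * expR (- ln (1 - 2 * la * L%:R) / 2)) ^+ n.
Proof.
move=> la_ge0 laL.
rewrite -sum1_card natr_sum big_mkcond /=.
apply: (@le_trans _ _ (\sum_t expR (la * (gram_sum t - thr)))).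
  apply: ler_sum => t _; rewrite inE; case: ifP => [thr_le|_]; last exact: expR_ge0.
  by rewrite -expR0 ler_expR mulr_ge0 // subr_ge0.
under eq_bigr do rewrite mulrBr addrC expRD.
rewrite -mulr_sumr ler_pM2l ?expR_gt0 //.
pose F (j : 'I_n) (e : {ffun 'I_L -> bool}) :=
  expR (la * (\sum_(i < L) bsign R (e i)) ^+ 2).
pose transpose (f : {ffun 'I_n -> {ffun 'I_L -> bool}}) : {ffun 'I_L -> word} :=
  [ffun i => [ffun j => f j i]].
rewrite (reindex transpose) /=; last first.
  exists (fun t : {ffun 'I_L -> word} => [ffun j => [ffun i => t i j]]).
    by move=> f _; apply/ffunP => j; apply/ffunP => i; rewrite !ffunE.
  by move=> t _; apply/ffunP => i; apply/ffunP => j; rewrite !ffunE.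
rewrite (eq_bigr (fun f : {ffun 'I_n -> _} => \prod_(j < n) F j (f j))); last first.
  move=> f _; rewrite /gram_sum mulr_sumr expR_sum; apply: eq_bigr => j _.
  by rewrite /F; congr (expR (_ * _ ^+ 2)); apply: eq_bigr => i _; rewrite !ffunE.
rewrite -(bigA_distr_bigA F) /= /F prodr_const card_ord.
apply: lerXn2r; rewrite ?nnegrE.
- by rewrite sumr_ge0 // => e _; apply: expR_ge0.
- by rewrite mulr_ge0 ?exprn_ge0 ?expR_ge0.
have := sum_expR_sqr_sign_sum_le R la L 0 la_ge0 laL.
rewrite expr0n /= mulr0 mul0r addr0.
by under eq_bigr do rewrite add0r.
Qed.

(* The Chernoff bound at the optimal [la = (1 - 1/u) / (2 L)]. *)
Lemma card_gram_sum_ge_le (u : R) : (0 < L)%N -> 1 <= u ->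
  #|[set t | n%:R * L%:R * u <= gram_sum t]|%:R <=
  2 ^+ (L * n) * expR (- (n%:R * (u - 1 - ln u) / 2)).
Proof.
move=> L_gt0 u_ge1.
have u_gt0 : 0 < u by lra.
have L_neq0 : L%:R != 0 :> R by rewrite pnatr_eq0 -lt0n.
have invu_le1 : u^-1 <= 1 by rewrite invf_le1.
set la := (1 - u^-1) / (2 * L%:R).
have la_ge0 : 0 <= la by rewrite divr_ge0 ?mulr_ge0 ?ler0n //; lra.
have laL : 1 - 2 * la * L%:R = u^-1 by rewrite /la; field; rewrite L_neq0 gt_eqF.
have laL1 : 2 * la * L%:R < 1 by rewrite -subr_gt0 laL invr_gt0.
have la_thr : la * (n%:R * L%:R * u) = n%:R * (u - 1) / 2.
  by rewrite /la; field; rewrite L_neq0 gt_eqF.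
apply: (le_trans (card_gram_sum_ge_le_mgf _ _ la_ge0 laL1)).
rewrite laL lnV ?posrE // opprK la_thr exprMn -exprM -expRM_natl mulrCA -expRD.
by rewrite ler_pM2l ?exprn_gt0 // ler_expR; lra.
Qed.

End Chernoff.
Arguments gram_sum {R n L}.

Section RandomSubset.
Variables (R : realType) (T : finType) (p : R).
Hypothesis p01 : 0 <= p <= 1.

Lemma big_setE (F : {set T} -> R) :
  \sum_(A : {set T}) F A = \sum_(f : {ffun T -> bool}) F [set x | f x].
Proof.
rewrite (reindex (fun f : {ffun T -> bool} => [set x | f x])) //.
exists (fun A : {set T} => [ffun x => x \in A]) => [f _|A _].
  by apply/ffunP => x; rewrite ffunE inE.
by apply/setP => x; rewrite inE ffunE.
Qed.

Definition subset_weight (A : {set T}) : R :=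
  \prod_x (if x \in A then p else 1 - p).

Lemma subset_weight_ge0 A : 0 <= subset_weight A.
Proof. by apply: prodr_ge0 => x _; case: (x \in A); case/andP: p01; lra. Qed.

Lemma sum_subset_weight_superset (h : {set T}) :
  \sum_A subset_weight A * (h \subset A)%:R = p ^+ #|h|.
Proof.
pose g x (b : bool) := if b then p else if x \in h then 0 else 1 - p.
rewrite (eq_bigr (fun A : {set T} => \prod_x g x (x \in A))); last first.
  move=> A _; rewrite /subset_weight /g.
  have [/fintype.subsetP hA|/subsetPn [x xh xNA]] := boolP (h \subset A).
    rewrite mulr1; apply: eq_bigr => x _; case: ifP => // xNA.
    by case: ifP => // /hA; rewrite xNA.
  by rewrite mulr0 (bigD1 x) //= (negbTE xNA) xh mul0r.
rewrite big_setE (eq_bigr (fun f : {ffun T -> bool} => \prod_x g x (f x))); last first.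
  by move=> f _; apply: eq_bigr => x _; rewrite inE.
rewrite -(bigA_distr_bigA g) /= (eq_bigr (fun x => if x \in h then p else 1)).
  by rewrite -big_mkcond prodr_const.
by move=> x _; rewrite big_bool /g /=; case: (x \in h); rewrite ?addr0 // addrC subrK.
Qed.

Lemma sum_subset_weight : \sum_A subset_weight A = 1.
Proof.
rewrite -(expr0 p) -(cards0 T) -sum_subset_weight_superset.
by apply: eq_bigr => A _; rewrite finset.sub0set mulr1.
Qed.

Lemma sum_subset_weight_mem x : \sum_A subset_weight A * (x \in A)%:R = p.
Proof.
rewrite -(expr1 p) -(cards1 x) -sum_subset_weight_superset.
by apply: eq_bigr => A _; rewrite finset.sub1set.
Qed.

Lemma exists_ge_subset_weight_mean (X : {set T} -> R) :
  exists A, \sum_B subset_weight B * X B <= X A.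
Proof.
have [A _ A_max] := @arg_maxP _ _ _ (finset.set0 : {set T}) predT X isT.
exists A; rewrite -[X A]mul1r -sum_subset_weight mulr_suml.
by apply: ler_sum => B _; apply: ler_wpM2l; [exact: subset_weight_ge0 | exact: A_max].
Qed.

Lemma natr_card (aT : finType) (S : {set aT}) : #|S|%:R = \sum_x (x \in S)%:R :> R.
Proof.
by rewrite -sum1_card natr_sum big_mkcond; apply: eq_bigr => x _; case: (x \in S).
Qed.

Lemma sum_subset_weight_card : \sum_A subset_weight A * #|A|%:R = #|T|%:R * p.
Proof.
under eq_bigr do rewrite natr_card mulr_sumr.
rewrite exchange_big (eq_bigr (fun=> p)) => [|x _]; last exact: sum_subset_weight_mem.
by rewrite sumr_const mulr_natl.
Qed.

(* The alteration method: keep each point with probability [p], then delete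
   one point from each bad injective [L]-tuple that survived. *)
Lemma exists_subset_avoiding (L : nat) (i0 : 'I_L) (bad : {set {ffun 'I_L -> T}}) :
  exists A : {set T}, #|T|%:R * p - #|bad|%:R * p ^+ L <= #|A|%:R /\
    forall t : {ffun 'I_L -> T}, injective t -> (forall i, t i \in A) -> t \notin bad.
Proof.
pose surv (A : {set T}) :=
  [set t in bad | injectiveb t && ([set t i | i : 'I_L] \subset A)].
have [A A_ge] := exists_ge_subset_weight_mean (fun A => #|A|%:R - #|surv A|%:R).
have mean_surv : \sum_B subset_weight B * #|surv B|%:R <= #|bad|%:R * p ^+ L.
  under eq_bigr do rewrite natr_card mulr_sumr.
  rewrite exchange_big natr_card mulr_suml; apply: ler_sum => t _.
  have [t_inj|] := boolP (injectiveb t); last first.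
    move=> t_ninj; rewrite big1 => [|B _]; last by rewrite inE (negbTE t_ninj) andbF mulr0.
    by rewrite mulr_ge0 ?exprn_ge0 //; case/andP: p01.
  under eq_bigr do rewrite inE t_inj /= -mulnb natrM mulrCA.
  rewrite -mulr_sumr sum_subset_weight_superset card_imset ?card_ord //.
  exact/injectiveP.
set D := [set t i0 | t : {ffun 'I_L -> T} in surv A].
exists (A :\: D); split.
  have card_ge : (#|A| <= #|A :\: D| + #|surv A|)%N.
    rewrite -(cardsID D A) addnC leq_add2l.
    exact: leq_trans (subset_leq_card (subsetIr _ _)) (leq_imset_card _ _).
  apply: le_trans (le_trans _ A_ge) _.
    under eq_bigr do rewrite mulrBr.
    by rewrite sumrB sum_subset_weight_card lerB.
  by rewrite lerBlDr -natrD ler_nat.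
move=> t t_inj tA; apply/negP => t_bad.
have t_surv : t \in surv A.
  rewrite inE t_bad /=; apply/andP; split; first by apply/injectiveP.
  by apply/fintype.subsetP => _ /imsetP [i _ ->]; have /setDP [] := tA i.
by have /setDP [_ /negP []] := tA i0; apply/imsetP; exists t.
Qed.

End RandomSubset.
Arguments exists_subset_avoiding {R T p} p01 {L}.

Lemma sum_sqr_sub_mean (R : realFieldType) (L : nat) (x : 'I_L -> R) : (0 < L)%N ->
  \sum_(i < L) (x i - L%:R^-1 * \sum_(k < L) x k) ^+ 2 =
  \sum_(i < L) x i ^+ 2 - L%:R^-1 * (\sum_(i < L) x i) ^+ 2.
Proof.
move=> L_gt0; set S := \sum_(k < L) x k.
have L_neq0 : L%:R != 0 :> R by rewrite pnatr_eq0 -lt0n.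
under eq_bigr do rewrite sqrrB -mulr_natr.
rewrite !big_split /= sumrN -!mulr_suml sumr_const card_ord -/S -mulr_natl.
by field.
Qed.

Section SignCode.
Variables (R : realType) (n : nat) (P : R).
Hypothesis P_gt0 : 0 < P.
Local Notation word := {ffun 'I_n -> bool}.

Definition sign_vec (w : word) : 'rV[R]_n := \row_j (Num.sqrt P * bsign R (w j)).

Lemma sqnorm_sign_vec w : sqnorm (sign_vec w) = n%:R * P.
Proof.
rewrite /sqnorm (eq_bigr (fun=> P)) => [|j _]; last first.
  by rewrite mxE exprMn bsign_sqr mulr1 sqr_sqrtr // ltW.
by rewrite sumr_const card_ord mulr_natl.
Qed.

Lemma sign_vecK : cancel sign_vec (fun v => [ffun j => 0 < v 0 j]).
Proof.
move=> w; apply/ffunP => j; rewrite ffunE mxE /bsign.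
by case: (w j); rewrite ?mulr1 ?mulrN1 ?sqrtr_gt0 // oppr_gt0 ltNge sqrtr_ge0.
Qed.

Lemma avg_rad2_sign_vec (L : nat) (t : {ffun 'I_L -> word}) : (0 < L)%N ->
  avg_rad2 (fun i => sign_vec (t i)) = n%:R * P - P / L%:R ^+ 2 * gram_sum t.
Proof.
move=> L_gt0; have L_neq0 : L%:R != 0 :> R by rewrite pnatr_eq0 -lt0n.
rewrite /avg_rad2 /sqnorm exchange_big /= /gram_sum.
under eq_bigr => j _.
  under eq_bigr => i _ do rewrite /centroid !mxE summxE.
  rewrite [X in L%:R^-1 * X](eq_bigr (fun k => Num.sqrt P * bsign R (t k j))) => [|k _].
    2: by rewrite mxE.
  rewrite sum_sqr_sub_mean // -mulr_sumr.
  under eq_bigr do rewrite exprMn bsign_sqr mulr1 sqr_sqrtr ?ltW //.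
  rewrite exprMn sqr_sqrtr ?ltW // sumr_const card_ord -[P *+ L]mulr_natl.
  over.
rewrite sumrB sumr_const card_ord -mulr_sumr -[_ *+ n]mulr_natl -!mulr_sumr.
by field.
Qed.

Lemma exists_sign_code (L : nat) (N p u : R) : (0 < L)%N -> 0 <= p <= 1 ->
  L%:R * (P - N) / P = u -> 1 <= u ->
  exists C : seq 'rV[R]_n, avg_rad_list_decodable L P N C /\
    2 ^+ n * p - 2 ^+ (L * n) * expR (- (n%:R * (u - 1 - ln u) / 2)) * p ^+ L
    <= (size C)%:R.
Proof.
move=> L_gt0 p01 u_def u_ge1.
have i0 : 'I_L := Ordinal L_gt0.
set bad := [set t : {ffun 'I_L -> word} | n%:R * L%:R * u <= gram_sum t].
have [A [A_large A_good]] := exists_subset_avoiding p01 i0 bad.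
exists (map sign_vec (enum A)); split; last first.
  rewrite size_map -cardE; apply: le_trans A_large.
  rewrite card_ffun card_bool card_ord natrX lerB // ler_wpM2r ?exprn_ge0 //.
    by case/andP: p01.
  exact: card_gram_sum_ge_le.
split; first by rewrite map_inj_uniq ?enum_uniq //; exact: can_inj sign_vecK.
split; first by move=> _ /mapP [w _ ->]; rewrite sqnorm_sign_vec.
move=> x x_inj xC.
pose t := [ffun i => [ffun j => 0 < x i 0 j] : word].
have x_t i : x i = sign_vec (t i) /\ t i \in A.
  by rewrite ffunE; case/mapP: (xC i) => w wA ->; rewrite sign_vecK -mem_enum.
have t_inj : injective t.
  by move=> i k tik; apply: x_inj; rewrite (proj1 (x_t i)) (proj1 (x_t k)) tik.
have := A_good t t_inj (fun i => proj2 (x_t i)); rewrite inE -ltNge => t_good.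
rewrite (boolp.funext (fun i => proj1 (x_t i))) avg_rad2_sign_vec //.
have Lr_gt0 : 0 < L%:R :> R by rewrite ltr0n.
have -> : n%:R * N = n%:R * P - P / L%:R ^+ 2 * (n%:R * L%:R * u).
  by rewrite -u_def; field; rewrite !gt_eqF.
by rewrite ltrD2l ltrN2 ltr_pM2l // divr_gt0 // exprn_gt0.
Qed.

End SignCode.
Arguments exists_sign_code {R n P} P_gt0 {L N p u}.

Section Rates.
Variable R : realType.

Lemma expR_half_le2 : expR (2^-1) <= 2 :> R.
Proof.
have := expR_ge1Dx (- 2^-1 : R); have := expR_gt0 (2^-1 : R).
have : expR (2^-1) * expR (- 2^-1) = 1 :> R by rewrite -expRD addrN expR0.
nra.
Qed.

Lemma expRN1_le_half : expR (-1) <= 2^-1 :> R.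
Proof.
have := expR_ge1Dx (1 : R); have := expR_gt0 (-1 : R).
have : expR 1 * expR (-1) = 1 :> R by rewrite -expRD addrN expR0.
nra.
Qed.

Lemma ln2_le1 : ln 2 <= 1 :> R.
Proof. by have := @le_ln1Dx R 1 ltac:(lra). Qed.

Lemma exists_code_size_ge (n L : nat) (P N u r : R) :
  (0 < L)%N -> 0 < P -> L%:R * (P - N) / P = u -> 1 <= u -> r <= 2^-1 ->
  n%:R * ((L%:R - 1) * r - (u - 1 - ln u) / 2) <= -1 ->
  exists C : seq 'rV[R]_n, avg_rad_list_decodable L P N C /\
    expR (n%:R * r) / 2 <= (size C)%:R.
Proof.
move=> L_gt0 P_gt0 u_def u_ge1 r_le.
rewrite -ler_expR => /le_trans/(_ expRN1_le_half) expexponent_le.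
(* Keeping words with probability [p] gives [expR (n r)] words on average;
   the hypothesis on [r] makes the surviving bad tuples at most half of them. *)
set p := expR (n%:R * r) / 2 ^+ n.
have two_n_p : 2 ^+ n * p = expR (n%:R * r) by rewrite mulrC divfK // expf_neq0.
have p01 : 0 <= p <= 1.
  rewrite divr_ge0 ?expR_ge0 ?exprn_ge0 //= ler_pdivrMr ?exprn_gt0 // mul1r.
  rewrite expRM_natl (le_trans _ (lerXn2r _ _ _ expR_half_le2)) ?nnegrE ?expR_ge0 //.
  by rewrite lerXn2r ?nnegrE ?expR_ge0 // ler_expR.
have [C [C_dec C_size]] := exists_sign_code (n := n) P_gt0 L_gt0 p01 u_def u_ge1.
exists C; split => //; apply: le_trans C_size.
have -> : 2 ^+ (L * n) * expR (- (n%:R * (u - 1 - ln u) / 2)) * p ^+ L =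
    expR (n%:R * r) * expR (n%:R * ((L%:R - 1) * r - (u - 1 - ln u) / 2)).
  rewrite mulnC exprM -mulrA mulrCA -exprMn two_n_p -expRM_natl -!expRD.
  by congr expR; ring.
rewrite two_n_p; have := expR_gt0 (n%:R * r); nra.
Qed.

Lemma exists_code_rate_ge (n L : nat) (P N u d : R) :
  (2 <= L)%N -> 0 < P -> 0 <= N -> L%:R * (P - N) / P = u -> 1 <= u ->
  0 < d -> 2 <= n%:R * d ->
  exists C : seq 'rV[R]_n, avg_rad_list_decodable L P N C /\
    (u - 1 - ln u) / (2 * (L%:R - 1)) - d <= rate C.
Proof.
move=> L_ge2 P_gt0 N_ge0 u_def u_ge1 d_gt0 nd_ge2.
have L_ge2' : 2 <= L%:R :> R by rewrite ler_nat.
have u_le : u <= L%:R.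
  by rewrite -u_def ler_pdivrMr // ler_pM2l ?ltr0n ?(leq_trans _ L_ge2) //; lra.
have lnu_ge0 : 0 <= ln u by exact: ln_ge0.
have lnu_le : ln u <= u - 1 by have := @le_ln1Dx R (u - 1); rewrite subrKC; apply; lra.
set f := (u - 1 - ln u) / (2 * (L%:R - 1)).
have f_le : f <= 2^-1 by rewrite ler_pdivrMr; lra.
have r_le : f - d / 2 <= 2^-1 by lra.
have exponent_le : n%:R * ((L%:R - 1) * (f - d / 2) - (u - 1 - ln u) / 2) <= -1.
  have -> : (L%:R - 1) * (f - d / 2) - (u - 1 - ln u) / 2 = - ((L%:R - 1) * d / 2).
    by rewrite /f; field; rewrite gt_eqF //; lra.
  have : 0 <= (L%:R - 2) * (n%:R * d) by rewrite mulr_ge0 //; lra.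
  nra.
have L_gt0 : (0 < L)%N by apply: leq_trans L_ge2.
have [C [C_dec C_size]] :=
  exists_code_size_ge n L P N u _ L_gt0 P_gt0 u_def u_ge1 r_le exponent_le.
exists C; split => //.
have n_gt0 : 0 < n%:R :> R.
  by rewrite ltr0n lt0n; apply/eqP => n0; move: nd_ge2; rewrite n0 mul0r; lra.
have ln_size : n%:R * (f - d / 2) - ln 2 <= ln (size C)%:R.
  rewrite -[n%:R * _]expRK -ln_div ?posrE ?expR_gt0 //.
  rewrite ler_ln ?posrE ?divr_gt0 ?expR_gt0 //.
  by apply: lt_le_trans C_size; rewrite divr_gt0 ?expR_gt0.
rewrite /rate ler_pdivlMr //; have := ln2_le1; nra.
Qed.

End Rates.
Arguments exists_code_rate_ge {R n L P N u d}.

Lemma list_dec_capacity_ge (R : realType) (L : nat) (P N f : R) :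
  (forall d, 0 < d -> exists n0, forall n, (n0 <= n)%N ->
     exists C : seq 'rV[R]_n, avg_rad_list_decodable L P N C /\ f - d <= rate C) ->
  (f%:E <= list_dec_capacity L P N)%E.
Proof.
move=> rates; apply/lee_subgt0Pr => d d_gt0.
rewrite /list_dec_capacity limn_esup_lim.
apply: lime_ge; first exact: is_cvg_esups.
have [n0 codes] := rates d d_gt0.
exists n0 => // n /= n_ge.
apply: (@le_trans _ _ (best_rate L P N n)); last first.
  by apply: ereal_sup_ubound; exists n => /=.
have [C [C_dec C_rate]] := codes n n_ge.
apply: (@le_trans _ _ (rate C)%:E); first by rewrite -EFinD lee_fin.
by apply: ereal_sup_ubound; exists C.
Qed.

Theorem mainTheorem6 (R : realType) (L : nat) (P N : R) :
  (2 <= L)%N -> 0 < P -> 0 < N -> N / P <= (L%:R - 1) / L%:R ->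
  ((2%:R^-1 * (1 - (L%:R * N) / ((L%:R - 1) * P)
      - (L%:R - 1)^-1 * ln (L%:R * (P - N) / P)))%:E
     <= list_dec_capacity L P N)%E.
Proof.
move=> L_ge2 P_gt0 N_gt0 NP_le.
have L_gt1 : 1 < L%:R :> R by rewrite ltr1n.
set u := L%:R * (P - N) / P.
have u_ge1 : 1 <= u.
  have -> : u = L%:R * (1 - N / P) by rewrite /u; field; rewrite gt_eqF.
  have : (L%:R - 1) / L%:R * L%:R = L%:R - 1 :> R by field; rewrite gt_eqF //; lra.
  nra.
have -> : 2%:R^-1 * (1 - L%:R * N / ((L%:R - 1) * P) - (L%:R - 1)^-1 * ln u) =
    (u - 1 - ln u) / (2 * (L%:R - 1)).
  by rewrite /u; field; rewrite !gt_eqF //; lra.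
apply: list_dec_capacity_ge => d d_gt0.
exists (Num.truncn (2 / d)).+1 => n n_ge.
apply: (exists_code_rate_ge L_ge2 P_gt0 (ltW N_gt0) erefl u_ge1 d_gt0).
have : 2 / d < n%:R by apply: lt_le_trans (truncnS_gt _) _; rewrite ler_nat.
by rewrite ltr_pdivrMr // => /ltW.
Qed.
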